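(* Let $f:\mathbb{R}^\ell\times\mathbb{R}^m\to\mathbb{R}^\ell$ be $C^1$, let $\Lambda$ be a parameter shift with limits $\lambda_\pm$, and let $X$ define a stable path. Let $N\in\mathbb{N}$ be such that $\|[D_xf(X(s),\Lambda(s))]^n\|<\frac14$ for all $s\in\mathbb{R}$ and $n\ge N$. Then, for $r>0$ and $\epsilon>0$ sufficiently small, for all $n\in\{N,N+1,\ldots,N(N+1)\}$ and all $(s,x)\in\mathcal{N}_\epsilon$, $$\|D_x[\pi\circ F_r^n](s,x)\|<\tfrac12.$$
   Context: A parameter shift is a $C^1$ function $\Lambda:\mathbb{R}\to\mathbb{R}^m$ with $\lim_{s\to\pm\infty}\Lambda(s)=\lambda_\pm$ and $\lim_{s\to\pm\infty}\Lambda'(s)=0$. A stable path is given by $X:\mathbb{R}\to\mathbb{R}^\ell$ such that: $X(s)$ is a fixed point of $f(\cdot,\Lambda(s))$ for every $s$; $\{(s,X(s))\}$ is a connected curve; the limits $X_\pm=\lim_{s\to\pm\infty}X(s)$ exist and are fixed points of $f(\cdot,\lambda_\pm)$; and the spectral radius of $D_xf(X(s),\Lambda(s))$ is $<1$ for all $s\in\mathbb{R}\cup\{\pm\infty\}$. For $r\ge0$, $F_r(s,x)=(s+r,f(x,\Lambda(s)))$ and $F_r^n$ is its $n$-fold composition; $\pi(s,x)=x$, and $D_x$ is the derivative with respect to the last $\ell$ coordinates. $\mathcal{N}_\epsilon=\{(s,x):s\in\mathbb{R},\ \|x-X(s)\|\le\epsilon\}$ (Euclidean norm; matrix norms induced).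 *)

From HB Require Import structures.
From mathcomp Require Import all_boot all_order all_algebra.
From mathcomp Require Import all_classical all_reals all_analysis.
From mathcomp Require Import complex.
Set Implicit Arguments. Unset Strict Implicit. Unset Printing Implicit Defensive.
Import Order.TTheory GRing.Theory Num.Theory.
Import numFieldNormedType.Exports.
Local Open Scope classical_set_scope.
Local Open Scope ring_scope.

Section Defs.
Variable R : realType.

Definition norm2 {n : nat} (v : 'cV[R]_n) : R :=
  Num.sqrt (\sum_(i < n) (v i 0) ^+ 2).

Definition opnorm {k n : nat} (A : 'M[R]_(k, n)) : R :=
  sup [set norm2 (A *m v) | v in [set v : 'cV[R]_n | norm2 v <= 1]].

Definition fderiv {n k : nat} (F : 'cV[R]_n -> 'cV[R]_k) (x : 'cV[R]_n)
  (A : 'M[R]_(k, n)) : Prop :=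
  forall e : R, 0 < e -> exists d : R, 0 < d /\
    forall h : 'cV[R]_n, norm2 h < d ->
      norm2 (F (x + h) - F x - A *m h) <= e * norm2 h.

Definition C1 {n k : nat} (F : 'cV[R]_n -> 'cV[R]_k) : Prop :=
  exists D : 'cV[R]_n -> 'M[R]_(k, n),
    (forall z, fderiv F z (D z)) /\ continuous D.

Definition C1_2 {l m : nat} (f : 'cV[R]_l -> 'cV[R]_m -> 'cV[R]_l) : Prop :=
  C1 (fun z : 'cV[R]_(l + m) => f (usubmx z) (dsubmx z)).

Definition spectral_radius {n : nat} (A : 'M[R]_n) : R :=
  sup [set Normc.normc mu | mu in
        [set mu : R[i] | eigenvalue (map_mx (fun a : R => (a%:C)%C) A) mu]].

Definition parameter_shift {m : nat} (Lam : R -> 'cV[R]_m)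
  (lamm lamp : 'cV[R]_m) : Prop :=
  (forall s, derivable Lam s 1) /\ continuous (derive1 Lam) /\
  Lam s @[s --> -oo] --> lamm /\ Lam s @[s --> +oo] --> lamp /\
  derive1 Lam s @[s --> -oo] --> (0 : 'cV[R]_m) /\
  derive1 Lam s @[s --> +oo] --> (0 : 'cV[R]_m).

(* Stable path; Dxf is the partial derivative of f with respect to x *)
Definition stable_path {l m : nat} (f : 'cV[R]_l -> 'cV[R]_m -> 'cV[R]_l)
  (Dxf : 'cV[R]_l -> 'cV[R]_m -> 'M[R]_l)
  (Lam : R -> 'cV[R]_m) (lamm lamp : 'cV[R]_m) (X : R -> 'cV[R]_l) : Prop :=
  (forall s, f (X s) (Lam s) = X s) /\
  connected [set p : R * 'cV[R]_l | p.2 = X p.1] /\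
  (exists Xm Xp : 'cV[R]_l,
     X s @[s --> -oo] --> Xm /\ X s @[s --> +oo] --> Xp /\
     f Xm lamm = Xm /\ f Xp lamp = Xp /\
     (forall s, spectral_radius (Dxf (X s) (Lam s)) < 1) /\
     spectral_radius (Dxf Xm lamm) < 1 /\
     spectral_radius (Dxf Xp lamp) < 1).

Definition Fr {l m : nat} (f : 'cV[R]_l -> 'cV[R]_m -> 'cV[R]_l)
  (Lam : R -> 'cV[R]_m) (r : R) (p : R * 'cV[R]_l) : R * 'cV[R]_l :=
  (p.1 + r, f p.2 (Lam p.1)).

End Defs.

From HB Require Import structures.
From mathcomp Require Import all_boot all_order all_algebra.
From mathcomp Require Import all_classical all_reals all_analysis.
From mathcomp Require Import complex.
From mathcomp Require Import ring lra.
Set Implicit Arguments. Unset Strict Implicit. Unset Printing Implicit Defensive.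
Import Order.TTheory GRing.Theory Num.Theory.
Import numFieldNormedType.Exports.
Local Open Scope classical_set_scope.
Local Open Scope ring_scope.

(* The x-derivative of the n-th iterate of F_r is, by the chain rule, the
   product of the Jacobians D_x f along the orbit.  If the orbit and the
   parameters Lambda(s + k r), k <= N(N+1), stay near a fixed point (x0, a0)
   of f, every factor is close to M = D_x f(X s, Lambda s), so the product is
   within 1/4 of M^n, whose norm is < 1/4.  Such neighbourhoods exist around
   each (X s0, Lambda s0) and around the end states (X-, lambda-), (X+, lambda+);
   compactness of the remaining interval of s makes r0 and eps0 uniform.
   X need not be continuous, but fixed points of f(., lambda) near X s0 depend
   Lipschitz-continuously on lambda (some power of D_x f contracts), so X could
   only leave a small ball around X s0 by jumping over its boundary sphere, and
   the connectedness of the graph of X rules that out. *)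

Section EuclideanNorm.
Variable R : realType.
Implicit Types (n k : nat) (a c : R).

Lemma sqrtr_le_of_le_sqr a c : 0 <= c -> a <= c ^+ 2 -> Num.sqrt a <= c.
Proof. by move=> c0 ac; rewrite -(ger0_norm c0) -sqrtr_sqr ler_sqrt // sqr_ge0. Qed.

Lemma le_sqrtr_of_sqr_le a c : 0 <= c -> c ^+ 2 <= a -> c <= Num.sqrt a.
Proof.
by move=> c0 ca; rewrite -(ger0_norm c0) -sqrtr_sqr ler_sqrt // (le_trans _ ca) ?sqr_ge0.
Qed.

Lemma norm2_ge0 n (v : 'cV[R]_n) : 0 <= norm2 v.
Proof. exact: sqrtr_ge0. Qed.

Lemma sqr_norm2 n (v : 'cV[R]_n) : norm2 v ^+ 2 = \sum_(i < n) v i 0 ^+ 2.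
Proof. by rewrite sqr_sqrtr // sumr_ge0 // => i _; rewrite sqr_ge0. Qed.

Lemma ler_coord_norm2 n (v : 'cV[R]_n) i : `|v i 0| <= norm2 v.
Proof.
apply: le_sqrtr_of_sqr_le => //; rewrite real_normK ?num_real //.
by rewrite (bigD1 i) //= lerDl sumr_ge0 // => j _; rewrite sqr_ge0.
Qed.

Lemma norm2_0 n : norm2 (0 : 'cV[R]_n) = 0.
Proof. by rewrite /norm2 big1 ?sqrtr0 // => i _; rewrite mxE expr0n. Qed.

Lemma norm2_eq0 n (v : 'cV[R]_n) : norm2 v = 0 -> v = 0.
Proof.
move=> v0; apply/matrixP => i j; rewrite (ord1 j) mxE.
by have := ler_coord_norm2 v i; rewrite v0 normr_le0 => /eqP.
Qed.

Lemma norm2_gt0 n (v : 'cV[R]_n) : v != 0 -> 0 < norm2 v.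
Proof.
by move=> v0; rewrite lt0r norm2_ge0 andbT; apply: contra_neq v0; exact: norm2_eq0.
Qed.

Lemma norm2Z n a (v : 'cV[R]_n) : norm2 (a *: v) = `|a| * norm2 v.
Proof.
rewrite /norm2 -sqrtr_sqr -sqrtrM ?sqr_ge0 // mulr_sumr.
by congr Num.sqrt; apply: eq_bigr => i _; rewrite mxE exprMn.
Qed.

Lemma norm2N n (v : 'cV[R]_n) : norm2 (- v) = norm2 v.
Proof. by rewrite -scaleN1r norm2Z normrN1 mul1r. Qed.

Lemma norm2_distC n (u v : 'cV[R]_n) : norm2 (u - v) = norm2 (v - u).
Proof. by rewrite -norm2N opprB. Qed.

(* Cauchy-Schwarz, from the nonnegativity of sum_i (|v| u_i - |u| v_i)^2. *)
Lemma ler_dot_norm2 n (u v : 'cV[R]_n) :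
  \sum_(i < n) u i 0 * v i 0 <= norm2 u * norm2 v.
Proof.
have [->|/norm2_gt0 a0] := eqVneq u 0.
  by rewrite norm2_0 mul0r big1 // => i _; rewrite mxE mul0r.
have [->|/norm2_gt0 b0] := eqVneq v 0.
  by rewrite norm2_0 mulr0 big1 // => i _; rewrite mxE mulr0.
set a := norm2 u in a0 *; set b := norm2 v in b0 *.
have key : (a * b) *+ 2 * (\sum_(i < n) u i 0 * v i 0)
    <= b ^+ 2 * \sum_(i < n) u i 0 ^+ 2 + a ^+ 2 * \sum_(i < n) v i 0 ^+ 2.
  rewrite !mulr_sumr -big_split /=; apply: ler_sum => i _.
  have := sqr_ge0 (b * u i 0 - a * v i 0); nra.
move: key; rewrite -!sqr_norm2 -/a -/b => key.
have ab2 : 0 < (a * b) *+ 2 by rewrite mulrn_wgt0 // mulr_gt0.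
by rewrite -(ler_pM2l ab2); nra.
Qed.

Lemma ler_norm2D n (u v : 'cV[R]_n) : norm2 (u + v) <= norm2 u + norm2 v.
Proof.
apply: sqrtr_le_of_le_sqr; first by rewrite addr_ge0 ?norm2_ge0.
have -> : \sum_(i < n) (u + v) i 0 ^+ 2 = \sum_(i < n) u i 0 ^+ 2 +
    \sum_(i < n) v i 0 ^+ 2 + 2 * \sum_(i < n) u i 0 * v i 0.
  by rewrite mulr_sumr -!big_split /=; apply: eq_bigr => i _; rewrite mxE; ring.
by rewrite -!sqr_norm2; have := ler_dot_norm2 u v; nra.
Qed.

Lemma ler_norm2B n (u v : 'cV[R]_n) : norm2 (u - v) <= norm2 u + norm2 v.
Proof. by rewrite -(norm2N v) ler_norm2D. Qed.

Lemma ler_norm2_sum n k (v : 'I_k -> 'cV[R]_n) :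
  norm2 (\sum_(j < k) v j) <= \sum_(j < k) norm2 (v j).
Proof.
elim: k v => [|k IH] v; first by rewrite !big_ord0 norm2_0.
by rewrite !big_ord_recr /= (le_trans (ler_norm2D _ _)) // lerD.
Qed.

Lemma ler_norm2_dist n (u v : 'cV[R]_n) : `|norm2 u - norm2 v| <= norm2 (u - v).
Proof.
have := ler_norm2D (u - v) v; have := ler_norm2D (v - u) u.
by rewrite !subrK (norm2_distC v) ler_norml; lra.
Qed.

Lemma ler_norm2_trans n (u v w : 'cV[R]_n) :
  norm2 (u - w) <= norm2 (u - v) + norm2 (v - w).
Proof. by have := ler_norm2D (u - v) (v - w); rewrite addrA subrK. Qed.

Lemma sqr_norm2_col_mx n k (u : 'cV[R]_n) (w : 'cV[R]_k) :
  norm2 (col_mx u w) ^+ 2 = norm2 u ^+ 2 + norm2 w ^+ 2.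
Proof.
rewrite !sqr_norm2 big_split_ord /=.
by congr (_ + _); apply: eq_bigr => i _; rewrite ?col_mxEu ?col_mxEd.
Qed.

Lemma ler_norm2_col_mx n k (u : 'cV[R]_n) (w : 'cV[R]_k) :
  norm2 (col_mx u w) <= norm2 u + norm2 w.
Proof.
apply: sqrtr_le_of_le_sqr; first by rewrite addr_ge0 ?norm2_ge0.
by rewrite -sqr_norm2 sqr_norm2_col_mx; have := norm2_ge0 u; have := norm2_ge0 w; nra.
Qed.

Lemma norm2_col_mx0 n k (u : 'cV[R]_n) : norm2 (col_mx u (0 : 'cV[R]_k)) = norm2 u.
Proof.
apply/eqP; rewrite -(eqrXn2 (n := 2)) ?norm2_ge0 //.
by rewrite sqr_norm2_col_mx norm2_0 expr0n addr0.
Qed.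

Lemma col_mxB n k (u u' : 'cV[R]_n) (w w' : 'cV[R]_k) :
  col_mx u w - col_mx u' w' = col_mx (u - u') (w - w').
Proof. by rewrite opp_col_mx add_col_mx. Qed.

Lemma ler_mxnorm_entry n k (A : 'M[R]_(n, k)) i j : `|A i j| <= `|A|.
Proof.
by rewrite [leRHS]/Num.norm /= mx_normrE; apply/bigmax_geP; right; exists (i, j).
Qed.

Lemma ler_mxnorm_norm2 n (v : 'cV[R]_n) : `|v| <= norm2 v.
Proof.
rewrite [leLHS]/Num.norm /= mx_normrE; apply/bigmax_leP; split=> [|[i j] _].
  exact: norm2_ge0.
by rewrite (ord1 j); exact: ler_coord_norm2.
Qed.

Lemma ler_norm2_mxnorm n (v : 'cV[R]_n) : norm2 v <= n%:R * `|v|.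
Proof.
apply: sqrtr_le_of_le_sqr; first by rewrite mulr_ge0.
have vn i : v i 0 ^+ 2 <= `|v| ^+ 2.
  by rewrite -real_normK ?num_real // lerXn2r ?nnegrE ?ler_mxnorm_entry.
have nn : n%:R <= n%:R ^+ 2 :> R.
  by rewrite -natrX ler_nat; case: n {v vn} => // n; rewrite expnS expn1 leq_pmulr.
apply: le_trans (ler_sum _ (fun i _ => vn i)) _.
by rewrite sumr_const card_ord exprMn -[_ *+ n]mulr_natl ler_wpM2r ?sqr_ge0.
Qed.

End EuclideanNorm.

Section OperatorNorm.
Variable R : realType.
Implicit Types (n k p : nat) (c : R).

Lemma ler_mxnorm_mulmx k n (A : 'M[R]_(k, n)) (v : 'cV[R]_n) :
  `|A *m v| <= n%:R * `|A| * norm2 v.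
Proof.
have c0 : 0 <= n%:R * `|A| * norm2 v by rewrite !mulr_ge0 ?norm2_ge0.
rewrite [leLHS]/Num.norm /= mx_normrE; apply/bigmax_leP; split=> // -[i j] _ /=.
rewrite (ord1 j) mxE (le_trans (ler_norm_sum _ _ _)) //.
have -> : n%:R * `|A| * norm2 v = \sum_(j' < n) `|A| * norm2 v.
  by rewrite sumr_const card_ord -mulrA mulr_natl.
by apply: ler_sum => j' _; rewrite normrM ler_pM ?ler_mxnorm_entry ?ler_coord_norm2.
Qed.

Lemma ler_norm2_mulmx_mxnorm k n (A : 'M[R]_(k, n)) (v : 'cV[R]_n) :
  norm2 (A *m v) <= (k * n)%:R * `|A| * norm2 v.
Proof.
apply: le_trans (ler_norm2_mxnorm _) _.
by rewrite natrM -!mulrA ler_wpM2l // mulrA ler_mxnorm_mulmx.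
Qed.

Let unit_image k n (A : 'M[R]_(k, n)) :=
  [set norm2 (A *m v) | v in [set v : 'cV[R]_n | norm2 v <= 1]].

Lemma unit_image0 k n (A : 'M[R]_(k, n)) : unit_image A 0.
Proof. by exists 0; rewrite /= ?mulmx0 norm2_0. Qed.

Lemma unit_image_ub k n (A : 'M[R]_(k, n)) : ubound (unit_image A) ((k * n)%:R * `|A|).
Proof.
move=> _ [v /= v1 <-]; apply: le_trans (ler_norm2_mulmx_mxnorm _ _) _.
by rewrite ler_piMr ?mulr_ge0.
Qed.

Lemma unit_image_has_ub k n (A : 'M[R]_(k, n)) : has_ubound (unit_image A).
Proof. by exists ((k * n)%:R * `|A|); exact: unit_image_ub. Qed.

Lemma opnorm_ge0 k n (A : 'M[R]_(k, n)) : 0 <= opnorm A.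
Proof. by apply: (ub_le_sup (unit_image_has_ub A)); exact: unit_image0. Qed.

Lemma opnorm_le k n (A : 'M[R]_(k, n)) c :
  0 <= c -> (forall v, norm2 (A *m v) <= c * norm2 v) -> opnorm A <= c.
Proof.
move=> c0 Ac; apply: ge_sup; first by exists 0; exact: unit_image0.
by move=> _ [v /= v1 <-]; rewrite (le_trans (Ac v)) // ler_piMr.
Qed.

Lemma opnorm_le_mxnorm k n (A : 'M[R]_(k, n)) : opnorm A <= (k * n)%:R * `|A|.
Proof. by apply: opnorm_le => [|v]; rewrite ?mulr_ge0 ?ler_norm2_mulmx_mxnorm. Qed.

Lemma ler_norm2_mulmx k n (A : 'M[R]_(k, n)) (v : 'cV[R]_n) :
  norm2 (A *m v) <= opnorm A * norm2 v.
Proof.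
have [->|/norm2_gt0 vp] := eqVneq v 0; first by rewrite mulmx0 !norm2_0 mulr0.
have w1 : norm2 ((norm2 v)^-1 *: v) <= 1.
  by rewrite norm2Z ger0_norm ?invr_ge0 ?norm2_ge0 // mulVf ?gt_eqF.
have /(ub_le_sup (unit_image_has_ub A)) :
    unit_image A (norm2 (A *m ((norm2 v)^-1 *: v))) by exists ((norm2 v)^-1 *: v).
rewrite -scalemxAr norm2Z ger0_norm ?invr_ge0 ?norm2_ge0 //.
by rewrite ler_pdivrMl // mulrC.
Qed.

Lemma ler_opnormD k n (A B : 'M[R]_(k, n)) : opnorm (A + B) <= opnorm A + opnorm B.
Proof.
apply: opnorm_le => [|v]; first by rewrite addr_ge0 ?opnorm_ge0.
rewrite mulmxDl (le_trans (ler_norm2D _ _)) // mulrDl.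
by rewrite lerD ?ler_norm2_mulmx.
Qed.

Lemma ler_opnormM k n p (A : 'M[R]_(k, n)) (B : 'M[R]_(n, p)) :
  opnorm (A *m B) <= opnorm A * opnorm B.
Proof.
apply: opnorm_le => [|v]; first by rewrite mulr_ge0 ?opnorm_ge0.
rewrite -mulmxA (le_trans (ler_norm2_mulmx _ _)) // -mulrA.
by rewrite ler_wpM2l ?opnorm_ge0 ?ler_norm2_mulmx.
Qed.

Lemma opnormN k n (A : 'M[R]_(k, n)) : opnorm (- A) = opnorm A.
Proof.
have opnormN_le (B : 'M[R]_(k, n)) : opnorm (- B) <= opnorm B.
  by apply: opnorm_le => [|v]; rewrite ?opnorm_ge0 // mulNmx norm2N ler_norm2_mulmx.
by apply/eqP; rewrite eq_le opnormN_le -{1}(opprK A) opnormN_le.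
Qed.

Lemma opnorm_distC k n (A B : 'M[R]_(k, n)) : opnorm (A - B) = opnorm (B - A).
Proof. by rewrite -opnormN opprB. Qed.

Lemma ler_opnorm_trans k n (A B C : 'M[R]_(k, n)) :
  opnorm (A - C) <= opnorm (A - B) + opnorm (B - C).
Proof. by have := ler_opnormD (A - B) (B - C); rewrite addrA subrK. Qed.

Lemma opnorm1_le n : opnorm (1%:M : 'M[R]_n) <= 1.
Proof. by apply: opnorm_le => // v; rewrite mul1mx mul1r. Qed.

Lemma opnorm_col_mx10_le n k : opnorm (col_mx 1%:M 0 : 'M[R]_(n + k, n)) <= 1.
Proof.
by apply: opnorm_le => // v; rewrite mul_col_mx mul1mx mul0mx norm2_col_mx0 mul1r.
Qed.

Lemma opnorm_le_local k n (A : 'M[R]_(k, n)) c d : 0 < d -> 0 <= c ->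
  (forall h, norm2 h < d -> norm2 (A *m h) <= c * norm2 h) -> opnorm A <= c.
Proof.
move=> d0 c0 Ac; apply: opnorm_le => // v.
have [->|/norm2_gt0 v0] := eqVneq v 0; first by rewrite mulmx0 !norm2_0 mulr0.
have t0 : 0 < d / (2 * norm2 v) by rewrite divr_gt0 // mulr_gt0.
have := Ac (d / (2 * norm2 v) *: v).
rewrite -scalemxAr !norm2Z gtr0_norm // mulrCA ler_pM2l //; apply.
by rewrite mulrAC -mulf_div divff ?gt_eqF // mulr1 gtr_pMr // invf_lt1 // ltr1n.
Qed.

Lemma opnorm_le0 k n (A : 'M[R]_(k, n)) : opnorm A <= 0 -> A = 0.
Proof.
move=> A0; apply/matrixP => i j; rewrite mxE.
have /norm2_eq0/matrixP/(_ i 0) : norm2 (A *m delta_mx j 0) = 0.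
  apply/eqP; rewrite eq_le norm2_ge0 andbT (le_trans (ler_norm2_mulmx _ _)) //.
  by rewrite mulr_le0_ge0 ?norm2_ge0.
rewrite !mxE => <-; rewrite (bigD1 j) //= big1 ?addr0 => [|j' /negPf j'j].
  by rewrite !mxE !eqxx mulr1.
by rewrite !mxE j'j mulr0.
Qed.

End OperatorNorm.

Section FrechetDerivative.
Variable R : realType.
Implicit Types (n k p : nat) (c e : R).

Lemma fderiv_unique k n (F : 'cV[R]_n -> 'cV[R]_k) x A B :
  fderiv F x A -> fderiv F x B -> A = B.
Proof.
move=> FA FB; apply/eqP; rewrite -subr_eq0; apply/eqP/opnorm_le0.
apply/ler_addgt0Pr => e e0; rewrite add0r.
have [d1 [d10 h1]] := FA (e / 2) (divr_gt0 e0 (ltr0Sn _ 1)).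
have [d2 [d20 h2]] := FB (e / 2) (divr_gt0 e0 (ltr0Sn _ 1)).
apply: (@opnorm_le_local _ _ _ _ _ (Num.min d1 d2)); rewrite ?lt_min ?d10 ?d20 ?ltW //.
move=> h; rewrite lt_min => /andP[/h1 hA /h2 hB].
have -> : (A - B) *m h = (F (x + h) - F x - B *m h) - (F (x + h) - F x - A *m h).
  by rewrite mulmxBl; set y := F (x + h) - F x; rewrite opprB [RHS]addrC addrA subrK.
by apply: le_trans (ler_norm2B _ _) _; lra.
Qed.

Lemma fderiv_lipschitz k n (F : 'cV[R]_n -> 'cV[R]_k) x A : fderiv F x A ->
  exists d, 0 < d /\
    forall h, norm2 h < d -> norm2 (F (x + h) - F x) <= (opnorm A + 1) * norm2 h.
Proof.
move=> FA; have [d [d0 hd]] := FA 1 ltr01; exists d; split => // h /hd Fh.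
rewrite -(subrK (A *m h) (F (x + h) - F x)) (le_trans (ler_norm2D _ _)) //.
by rewrite mulrDl mul1r [leRHS]addrC lerD ?ler_norm2_mulmx // -[leRHS]mul1r.
Qed.

Lemma ler_half_div e c : 0 < e -> 0 <= c -> c * (e / (2 * (c + 1))) <= e / 2.
Proof.
move=> e0 c0; have c1 : 0 < c + 1 by rewrite ltr_wpDl.
have -> : c * (e / (2 * (c + 1))) = e / 2 * (c / (c + 1)) by field; rewrite gt_eqF.
by rewrite ler_piMr ?divr_ge0 ?(ltW e0) // ler_pdivrMr // mul1r lerDl.
Qed.

Lemma fderiv_comp k n p (g : 'cV[R]_n -> 'cV[R]_k) (h : 'cV[R]_k -> 'cV[R]_p) x A B :
  fderiv g x A -> fderiv h (g x) B -> fderiv (fun y => h (g y)) x (B *m A).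
Proof.
move=> gA hB e e0.
set a := opnorm A; set b := opnorm B.
have a0 : 0 <= a := opnorm_ge0 A; have b0 : 0 <= b := opnorm_ge0 B.
have pos c : 0 <= c -> 0 < e / (2 * (c + 1)).
  by move=> c0; rewrite divr_gt0 // mulr_gt0 // ltr_wpDl.
have [d0 [d00 g_lip]] := fderiv_lipschitz gA.
have [d1 [d10 g_lin]] := gA _ (pos _ b0).
have [d2 [d20 h_lin]] := hB _ (pos _ a0).
exists (Num.min d0 (Num.min d1 (d2 / (a + 1)))).
split=> [|v]; first by rewrite !lt_min d00 d10 divr_gt0 // ltr_wpDl.
rewrite !lt_min => /and3P[/g_lip gu /g_lin gv vd2].
set u := g (x + v) - g x in gu gv.
have ud2 : norm2 u < d2.
  by apply: le_lt_trans gu _; rewrite mulrC -ltr_pdivlMr // ltr_wpDl.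
have -> : g (x + v) = g x + u by rewrite /u [RHS]addrC subrK.
clearbody u.
have -> : h (g x + u) - h (g x) - B *m A *m v =
    (h (g x + u) - h (g x) - B *m u) + B *m (u - A *m v).
  by rewrite mulmxBr mulmxA addrA subrK.
apply: le_trans (ler_norm2D _ _) _.
rewrite [e * _](_ : _ = e / 2 * norm2 v + e / 2 * norm2 v); last first.
  by rewrite -mulrDl -splitr.
apply: lerD.
  apply: le_trans (h_lin _ ud2) _.
  apply: le_trans (ler_wpM2l (ltW (pos _ a0)) gu) _.
  rewrite -/a mulrA.
  by have -> : e / (2 * (a + 1)) * (a + 1) = e / 2 by field; rewrite gt_eqF // ltr_wpDl.
apply: le_trans (ler_norm2_mulmx _ _) _; apply: le_trans (ler_wpM2l b0 gv) _.
by rewrite mulrA ler_wpM2r ?norm2_ge0 // ler_half_div.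
Qed.

Lemma fderiv_affine k n (F : 'cV[R]_n -> 'cV[R]_k) x A :
  (forall h, F (x + h) - F x = A *m h) -> fderiv F x A.
Proof.
move=> FA e e0; exists 1; split=> // h _.
by rewrite FA subrr norm2_0 mulr_ge0 ?norm2_ge0 ?ltW.
Qed.

Lemma fderiv_id n (x : 'cV[R]_n) : fderiv id x 1%:M.
Proof. by apply: fderiv_affine => h; rewrite mul1mx addrC addKr. Qed.

Lemma fderiv_col_mxl n k (c : 'cV[R]_k) (x : 'cV[R]_n) :
  fderiv (fun y => col_mx y c) x (col_mx 1%:M 0).
Proof.
apply: fderiv_affine => h; rewrite mul_col_mx mul1mx mul0mx col_mxB subrr.
by rewrite addrC addKr.
Qed.

End FrechetDerivative.

Lemma continuous_at_dist_lt (R : realType) (V W : normedModType R) (g : V -> W) x e :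
  {for x, continuous g} -> 0 < e ->
  exists2 d, 0 < d & forall y, `|x - y| < d -> `|g x - g y| < e.
Proof.
move=> /cvgr_dist_lt/(_ e) gx /gx /nbhs_normP[d d0 gd].
by exists d => // y /gd.
Qed.

Section JointRegularity.
Variables (R : realType) (l m : nat).
Variable f : 'cV[R]_l -> 'cV[R]_m -> 'cV[R]_l.
Variable D : 'cV[R]_(l + m) -> 'M[R]_(l, l + m).
Hypothesis fD : forall z, fderiv (fun z => f (usubmx z) (dsubmx z)) z (D z).
Variable Dxf : 'cV[R]_l -> 'cV[R]_m -> 'M[R]_l.
Hypothesis fDxf : forall x a, fderiv (f^~ a) x (Dxf x a).

Lemma Dxf_col_mx x a : Dxf x a = D (col_mx x a) *m col_mx 1%:M 0.
Proof.
apply: (fderiv_unique (fDxf x a)).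
have := fderiv_comp (fderiv_col_mxl a x) (fD (col_mx x a)).
by under eq_fun => y do rewrite col_mxKu col_mxKd.
Qed.

Lemma D_mulmx_col_mx x a (u : 'cV[R]_l) (w : 'cV[R]_m) :
  D (col_mx x a) *m col_mx u w =
    Dxf x a *m u + (D (col_mx x a) *m (col_mx 0 1%:M : 'M[R]_(l + m, m))) *m w.
Proof.
rewrite Dxf_col_mx -!mulmxA -mulmxDr !mul_col_mx !mul1mx !mul0mx add_col_mx.
by rewrite addr0 add0r.
Qed.

Lemma f_continuous x0 a0 e : 0 < e -> exists2 eta, 0 < eta &
  forall x a, norm2 (x - x0) <= eta -> norm2 (a - a0) <= eta ->
    norm2 (f x a - f x0 a0) <= e.
Proof.
move=> e0; have [d [d0 f_lip]] := fderiv_lipschitz (fD (col_mx x0 a0)).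
set C := opnorm (D (col_mx x0 a0)) + 1 in f_lip.
have C0 : 0 < C by rewrite ltr_wpDl ?opnorm_ge0.
exists (Num.min (d / 3) (e / (2 * C))); first by rewrite lt_min !divr_gt0 ?mulr_gt0.
move=> x a; rewrite !le_min => /andP[xd xe] /andP[ad ae].
have z_near : norm2 (col_mx x a - col_mx x0 a0) <= norm2 (x - x0) + norm2 (a - a0).
  by rewrite col_mxB ler_norm2_col_mx.
have /f_lip : norm2 (col_mx x a - col_mx x0 a0) < d by apply: le_lt_trans z_near _; lra.
rewrite addrCA subrr addr0 !col_mxKu !col_mxKd => /le_trans; apply.
have -> : e = C * (e / (2 * C) + e / (2 * C)) by field; rewrite gt_eqF.
by rewrite ler_pM2l // (le_trans z_near) // lerD.
Qed.

Hypothesis D_cont : continuous D.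

Lemma Dxf_continuous x0 a0 e : 0 < e -> exists2 eta, 0 < eta &
  forall x a, norm2 (x - x0) <= eta -> norm2 (a - a0) <= eta ->
    opnorm (Dxf x a - Dxf x0 a0) <= e.
Proof.
move=> e0; set K := (l * (l + m))%:R + 1 : R.
have K0 : 0 < K by rewrite ltr_wpDl.
have [d d0 Dd] := continuous_at_dist_lt (@D_cont (col_mx x0 a0)) (divr_gt0 e0 K0).
exists (d / 3); first by rewrite divr_gt0.
move=> x a xd ad; rewrite !Dxf_col_mx -mulmxBl.
apply: le_trans (ler_opnormM _ _) _.
apply: le_trans (ler_wpM2l (opnorm_ge0 _) (opnorm_col_mx10_le R l m)) _.
rewrite mulr1 (le_trans (opnorm_le_mxnorm _)) //.
have /Dd : `|col_mx x0 a0 - col_mx x a| < d.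
  apply: le_lt_trans (ler_mxnorm_norm2 _) _.
  rewrite col_mxB; apply: le_lt_trans (ler_norm2_col_mx _ _) _.
  rewrite norm2_distC (norm2_distC a0); lra.
rewrite distrC -(ltr_pM2l K0) mulrCA divff ?gt_eqF // mulr1 => /ltW.
by apply: le_trans; rewrite ler_wpM2r // lerDl.
Qed.

End JointRegularity.

Section MatrixProducts.
Variables (R : realType) (l : nat).
Implicit Types (B : nat -> 'M[R]_l) (M : 'M[R]_l) (c d : R).

Fixpoint prodmx B k : 'M[R]_l := if k is k'.+1 then B k' *m prodmx B k' else 1%:M.

Lemma opnorm_prodmx_le B c n : 0 <= c ->
  (forall k, (k < n)%N -> opnorm (B k) <= c) -> opnorm (prodmx B n) <= c ^+ n.
Proof.
move=> c0; elim: n => [|n IH] Bc; first by rewrite expr0 opnorm1_le.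
rewrite exprS (le_trans (ler_opnormM _ _)) // ler_pM ?opnorm_ge0 ?Bc //.
by apply: IH => k /ltnW; exact: Bc.
Qed.

Lemma opnorm_prodmx_sub_pow_le M B c d n : 0 <= c -> 0 <= d <= 1 -> opnorm M <= c ->
  (forall k, (k < n)%N -> opnorm (B k - M) <= d) ->
  opnorm (prodmx B n - M ^+ n) <= n%:R * d * (c + 1) ^+ n.
Proof.
move=> c0 /andP[d0 d1] Mc; elim: n => [|n IH] BM.
  by rewrite subrr !mul0r; apply: opnorm_le => // v; rewrite mul0mx norm2_0 mul0r.
have {}IH := IH (fun k kn => BM k (ltnW kn)).
have Bc k : (k < n.+1)%N -> opnorm (B k) <= c + 1.
  move=> /BM BkM; rewrite -(subrK M (B k)) (le_trans (ler_opnormD _ _)) //.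
  by rewrite [leRHS]addrC lerD // (le_trans BkM d1).
have P_le := opnorm_prodmx_le (addr_ge0 c0 ler01) (fun k kn => Bc k (ltnW kn)).
have -> : prodmx B n.+1 - M ^+ n.+1 =
    (B n - M) *m prodmx B n + M *m (prodmx B n - M ^+ n).
  by rewrite /= exprS mulmxBl mulmxBr mulmxE addrA subrK.
apply: le_trans (ler_opnormD _ _) _.
apply: le_trans (lerD (ler_opnormM _ _) (ler_opnormM _ _)) _.
have c1n : 0 <= (c + 1) ^+ n by rewrite exprn_ge0 // addr_ge0.
have := ler_pM (opnorm_ge0 _) (opnorm_ge0 _) (BM n (ltnSn n)) P_le.
have := ler_pM (opnorm_ge0 _) (opnorm_ge0 _) Mc IH.
rewrite exprS -natr1; set P := (c + 1) ^+ n in c1n *.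
have : 0 <= n%:R * d * P by rewrite !mulr_ge0.
have : 0 <= d * P * c by rewrite !mulr_ge0.
lra.
Qed.

Definition prod_tolerance c (n0 : nat) : R :=
  Num.min 1 (4 * (n0%:R + 1) * (c + 1) ^+ n0)^-1.

Lemma prod_tolerance_gt0 c n0 : 0 <= c -> 0 < prod_tolerance c n0.
Proof.
by move=> c0; rewrite lt_min ltr01 invr_gt0 !mulr_gt0 ?exprn_gt0 // ltr_wpDl.
Qed.

Lemma opnorm_prodmx_sub_pow_quarter M B c (n0 n : nat) :
  0 <= c -> opnorm M <= c -> (n <= n0)%N ->
  (forall k, (k < n)%N -> opnorm (B k - M) <= prod_tolerance c n0) ->
  opnorm (prodmx B n - M ^+ n) <= 1 / 4.
Proof.
move=> c0 Mc nn0 BM.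
have d0 : 0 <= prod_tolerance c n0 by rewrite ltW ?prod_tolerance_gt0.
have d01 : 0 <= prod_tolerance c n0 <= 1 by rewrite d0 ge_min lexx.
apply: le_trans (opnorm_prodmx_sub_pow_le c0 d01 Mc BM) _.
have c1 : 1 <= c + 1 by rewrite lerDr.
have P0 : 0 < (c + 1) ^+ n0 by rewrite exprn_gt0 // ltr_wpDl.
have n00 : 0 < 4 * (n0%:R + 1) :> R by rewrite mulr_gt0 // ltr_wpDl.
have tolP : prod_tolerance c n0 * (c + 1) ^+ n0 <= (4 * (n0%:R + 1))^-1.
  apply: le_trans (ler_wpM2r (ltW P0) (_ : _ <= (4 * (n0%:R + 1) * (c + 1) ^+ n0)^-1)) _.
    by rewrite ge_min lexx orbT.
  by rewrite invfM -mulrA mulVf ?mulr1 ?gt_eqF.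
apply: (@le_trans _ _ (n0%:R * prod_tolerance c n0 * (c + 1) ^+ n0)).
  apply: ler_pM; rewrite ?mulr_ge0 ?exprn_ge0 ?addr_ge0 ?ler_weXn2l //.
  by rewrite ler_wpM2r // ler_nat.
rewrite -mulrA (le_trans (ler_wpM2l (ler0n _ _) tolP)) // ler_pdivrMr // mul1r.
lra.
Qed.

End MatrixProducts.

Section Iterates.
Variables (R : realType) (l m : nat).
Variable f : 'cV[R]_l -> 'cV[R]_m -> 'cV[R]_l.
Variable Lam : R -> 'cV[R]_m.

Lemma iter_Fr_fst r s y k : (iter k (Fr f Lam r) (s, y)).1 = s + k%:R * r.
Proof.
elim: k => [|k IH]; first by rewrite mul0r addr0.
by rewrite iterS /= IH -natr1 mulrDl mul1r addrA.
Qed.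

Lemma iter_Fr_snd r s y k : (iter k.+1 (Fr f Lam r) (s, y)).2 =
  f (iter k (Fr f Lam r) (s, y)).2 (Lam (s + k%:R * r)).
Proof. by rewrite iterS /= iter_Fr_fst. Qed.

Variable Dxf : 'cV[R]_l -> 'cV[R]_m -> 'M[R]_l.
Hypothesis fDxf : forall x a, fderiv (f^~ a) x (Dxf x a).

Lemma fderiv_iter_Fr r s x k :
  fderiv (fun y => (iter k (Fr f Lam r) (s, y)).2) x
    (prodmx (fun j => Dxf (iter j (Fr f Lam r) (s, x)).2 (Lam (s + j%:R * r))) k).
Proof.
elim: k => [|k IH]; first exact: fderiv_id.
under eq_fun => y do rewrite iter_Fr_snd.
exact: fderiv_comp IH (fDxf _ _).
Qed.

End Iterates.

Section NearFixedPoint.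
Variables (R : realType) (l m : nat).
Variable f : 'cV[R]_l -> 'cV[R]_m -> 'cV[R]_l.
Variable Dxf : 'cV[R]_l -> 'cV[R]_m -> 'M[R]_l.
Variables (x0 : 'cV[R]_l) (a0 : 'cV[R]_m).
Hypothesis fx0 : f x0 a0 = x0.
Hypothesis f_cont : forall e, 0 < e -> exists2 eta, 0 < eta &
  forall x a, norm2 (x - x0) <= eta -> norm2 (a - a0) <= eta ->
    norm2 (f x a - f x0 a0) <= e.

Lemma orbit_near_fixed_point (K : nat) th : 0 < th ->
  exists2 tau, 0 < tau & tau <= th /\
  forall (xs : nat -> 'cV[R]_l) (az : nat -> 'cV[R]_m),
    norm2 (xs 0%N - x0) <= tau ->
    (forall k, (k < K)%N -> norm2 (az k - a0) <= tau) ->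
    (forall k, (k < K)%N -> xs k.+1 = f (xs k) (az k)) ->
    forall k, (k <= K)%N -> norm2 (xs k - x0) <= th.
Proof.
elim: K th => [|K IH] th th0.
  by exists th => //; split=> // xs az x0tau _ _ k; rewrite leqn0 => /eqP->.
have [eta eta0 f_eta] := f_cont th0.
have th_eta : 0 < Num.min th eta by rewrite lt_min th0 eta0.
have [tau tau0 [tau_le near]] := IH _ th_eta.
rewrite le_min in tau_le; case/andP: tau_le => tau_th tau_eta.
exists tau => //; split=> // xs az xs0 az_near xs_orbit k.
have {}near := near xs az xs0 (fun k kK => az_near k (ltnW kK))
  (fun k kK => xs_orbit k (ltnW kK)).
rewrite leq_eqVlt => /orP[/eqP->|/near]; last by rewrite le_min => /andP[].
rewrite xs_orbit // -{1}fx0 f_eta //.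
  by have := near K (leqnn K); rewrite le_min => /andP[].
exact: le_trans (az_near K (ltnSn K)) tau_eta.
Qed.

Variables (Lam : R -> 'cV[R]_m) (X : R -> 'cV[R]_l) (N : nat).
Hypothesis fDxf : forall x a, fderiv (f^~ a) x (Dxf x a).
Hypothesis Dxf_cont : forall e, 0 < e -> exists2 eta, 0 < eta &
  forall x a, norm2 (x - x0) <= eta -> norm2 (a - a0) <= eta ->
    opnorm (Dxf x a - Dxf x0 a0) <= e.
Hypothesis DxfX_pow : forall s n, (N <= n)%N ->
  opnorm (Dxf (X s) (Lam s) ^+ n) < 1 / 4.

Lemma iter_Fr_contracting_near_fixed_point : exists2 eta, 0 < eta &
  forall s r x n, (N <= n <= N * N.+1)%N ->
    norm2 (X s - x0) <= eta -> norm2 (x - X s) <= eta ->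
    (forall k, (k <= N * N.+1)%N -> norm2 (Lam (s + k%:R * r) - a0) <= eta) ->
    exists A : 'M[R]_l,
      fderiv (fun y => (iter n (Fr f Lam r) (s, y)).2) x A /\ opnorm A < 1 / 2.
Proof.
set n0 := (N * N.+1)%N; set c := opnorm (Dxf x0 a0) + 1.
have c0 : 0 <= c by rewrite addr_ge0 ?opnorm_ge0.
set tol := prod_tolerance c n0.
have tol0 : 0 < tol := prod_tolerance_gt0 n0 c0.
have tol1 : tol <= 1 by rewrite ge_min lexx.
have [th th0 Dxf_th] := Dxf_cont (divr_gt0 tol0 (ltr0Sn _ 1)).
have [tau tau0 [tau_th orbit_th]] := orbit_near_fixed_point n0 th0.
exists (tau / 2); first by rewrite divr_gt0.
move=> s r x n /andP[Nn nn0] Xs xXs Lam_near.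
set xs := fun k => (iter k (Fr f Lam r) (s, x)).2.
set az := fun k => Lam (s + k%:R * r).
have xs_near k : (k <= n0)%N -> norm2 (xs k - x0) <= th.
  apply: orbit_th => [||j _]; last by rewrite /xs iter_Fr_snd.
    by apply: le_trans (ler_norm2_trans _ (X s) _) _; lra.
  by move=> j /ltnW/Lam_near; lra.
set M := Dxf (X s) (Lam s).
have M_near : opnorm (M - Dxf x0 a0) <= tol / 2.
  apply: Dxf_th; first lra.
  by have := Lam_near 0%N (leq0n _); rewrite mul0r addr0; lra.
have B_near k : (k < n)%N -> opnorm (Dxf (xs k) (az k) - M) <= tol.
  move=> kn; have kn0 : (k <= n0)%N by rewrite (leq_trans (ltnW kn)).
  rewrite (le_trans (ler_opnorm_trans _ (Dxf x0 a0) _)) // (opnorm_distC _ M).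
  have : opnorm (Dxf (xs k) (az k) - Dxf x0 a0) <= tol / 2.
    by apply: Dxf_th; [exact: xs_near | have := Lam_near k kn0; lra].
  lra.
have M_le : opnorm M <= c.
  rewrite -(subrK (Dxf x0 a0) M) (le_trans (ler_opnormD _ _)) // [leRHS]addrC.
  by rewrite lerD //; lra.
exists (prodmx (fun j => Dxf (xs j) (az j)) n); split; first exact: fderiv_iter_Fr.
rewrite -(subrK (M ^+ n) (prodmx _ n)) (le_lt_trans (ler_opnormD _ _)) //.
have := opnorm_prodmx_sub_pow_quarter c0 M_le nn0 B_near.
have := DxfX_pow s Nn; rewrite -/M; lra.
Qed.

End NearFixedPoint.

Section FixedPointsLipschitz.
Variables (R : realType) (l m : nat).

Lemma telescope_pow (A : 'M[R]_l) (d : 'cV[R]_l) k :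
  d = A ^+ k *m d + \sum_(j < k) A ^+ j *m (d - A *m d).
Proof.
elim: k => [|k IH]; first by rewrite big_ord0 addr0 expr0 mul1mx.
have AkA : A ^+ k *m A = A ^+ k.+1 by rewrite exprSr mulmxE.
rewrite big_ord_recr /= mulmxBr mulmxA AkA.
set P := A ^+ k.+1 *m d; set Q := A ^+ k *m d; set S := \sum_(j < k) _.
by rewrite addrCA [Q - P]addrC addNKr addrC -IH.
Qed.

Lemma ler_norm2_telescope (A : 'M[R]_l) (d : 'cV[R]_l) k :
  norm2 d <= opnorm (A ^+ k) * norm2 d +
             (\sum_(j < k) opnorm (A ^+ j)) * norm2 (d - A *m d).
Proof.
rewrite {1}(telescope_pow A d k) (le_trans (ler_norm2D _ _)) // lerD ?ler_norm2_mulmx //.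
rewrite (le_trans (ler_norm2_sum _)) // mulr_suml.
by apply: ler_sum => j _; exact: ler_norm2_mulmx.
Qed.

Variable f : 'cV[R]_l -> 'cV[R]_m -> 'cV[R]_l.
Variable D : 'cV[R]_(l + m) -> 'M[R]_(l, l + m).
Hypothesis fD : forall z, fderiv (fun z => f (usubmx z) (dsubmx z)) z (D z).
Variable Dxf : 'cV[R]_l -> 'cV[R]_m -> 'M[R]_l.
Hypothesis fDxf : forall x a, fderiv (f^~ a) x (Dxf x a).

(* Linearising at (x0, a0), a nearby fixed point x of f(., a) satisfies
   d - A d = O(|a - a0|) + o(|d|) with d = x - x0; as A^k contracts,
   the telescoping bound turns this into |d| = O(|a - a0|). *)
Lemma fixed_point_lipschitz x0 a0 k : f x0 a0 = x0 -> opnorm (Dxf x0 a0 ^+ k) < 1 ->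
  exists2 rho, 0 < rho & exists2 K, 0 <= K &
  forall x a, norm2 (x - x0) <= rho -> norm2 (a - a0) <= rho -> f x a = x ->
    norm2 (x - x0) <= K * norm2 (a - a0).
Proof.
move=> fx0 q1; set A := Dxf x0 a0.
set Ba := D (col_mx x0 a0) *m (col_mx 0 1%:M : 'M[R]_(l + m, m)).
set q := opnorm (A ^+ k) in q1; rewrite -subr_gt0 in q1.
set S := \sum_(j < k) opnorm (A ^+ j); set b := opnorm Ba.
have q0 : 0 <= q := opnorm_ge0 _; have b0 : 0 <= b := opnorm_ge0 _.
have S0 : 0 <= S by apply: sumr_ge0 => j _; exact: opnorm_ge0.
set eps := (1 - q) / (2 * (S + 1)).
have eps0 : 0 < eps by rewrite divr_gt0 // mulr_gt0 // ltr_wpDl.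
have Seps : S * eps <= (1 - q) / 2.
  exact: ler_half_div.
have [dd [dd0 D0_lin]] := fD (col_mx x0 a0) eps0.
exists (dd / 3); first by rewrite divr_gt0.
have K0 : 0 <= 2 * S * b / (1 - q) by rewrite divr_ge0 ?mulr_ge0 ?ler0n // ltW.
exists (1 + 2 * S * b / (1 - q)); first exact: addr_ge0 ler01 K0.
move=> x a xd ad fxa.
set d := x - x0 in xd *; set e := a - a0 in ad *.
have nd := norm2_ge0 d; have ne := norm2_ge0 e.
have /D0_lin : norm2 (col_mx d e) < dd.
  by apply: le_lt_trans (ler_norm2_col_mx _ _) _; lra.
rewrite -col_mxB addrCA subrr addr0 !col_mxKu !col_mxKd fxa fx0 col_mxB.
rewrite (D_mulmx_col_mx fD fDxf) -/A -/Ba.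
move=> /le_trans/(_ (ler_wpM2l (ltW eps0) (ler_norm2_col_mx d e))) lin.
have step : norm2 (d - A *m d) <= eps * (norm2 d + norm2 e) + b * norm2 e.
  have -> : d - A *m d = (x - x0 - (A *m d + Ba *m e)) + Ba *m e.
    by rewrite opprD addrA subrK.
  by rewrite (le_trans (ler_norm2D _ _)) // lerD ?ler_norm2_mulmx.
have tele := ler_norm2_telescope A d k; rewrite -/q -/S in tele.
have Sstep := ler_wpM2l S0 step.
have Se0 := mulr_ge0 (mulr_ge0 S0 (ltW eps0)) ne.
rewrite ler_pdivlMr // in Seps.
rewrite mulrDl mul1r -lerBlDl [_ / _ * _]mulrAC ler_pdivlMr //.
nra.
Qed.

End FixedPointsLipschitz.

Section GraphTopology.
Variables (R : realType) (l : nat).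
Local Notation T := (R * 'cV[R]_l)%type.

Lemma norm2_continuous (x0 : 'cV[R]_l) : continuous (fun v : 'cV[R]_l => norm2 (v - x0)).
Proof.
move=> v; apply/(cvgrPdist_lt (FF := nbhs_filter v)) => e e0.
have l1 : 0 < l%:R + 1 :> R by rewrite ltr_wpDl.
apply/nbhs_ballP; exists (e / (l%:R + 1)) => /=; first by rewrite divr_gt0.
move=> w; rewrite mx_norm_ball /ball_ /= => vw.
apply: le_lt_trans (ler_norm2_dist _ _) _; rewrite opprB addrA subrK.
apply: le_lt_trans (ler_norm2_mxnorm _) _.
move: vw; rewrite ltr_pdivlMr // => vw.
have := normr_ge0 (v - w); have := ler0n R l; nra.
Qed.

Lemma fst_continuous : continuous (fun p : T => p.1).
Proof. by move=> p; exact: cvg_fst. Qed.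

Lemma snd_norm2_continuous x0 : continuous (fun p : T => norm2 (p.2 - x0)).
Proof.
have snd_cont : continuous (fun p : T => p.2) by move=> p; exact: cvg_snd.
by move=> p; exact: continuous_comp (snd_cont p) (@norm2_continuous x0 p.2).
Qed.

Lemma open_fst_lt (b : R) : open [set p : T | p.1 < b].
Proof. exact: (open_comp (fun p _ => @fst_continuous p) (@open_lt R b)). Qed.

Lemma open_fst_gt (b : R) : open [set p : T | b < p.1].
Proof. exact: (open_comp (fun p _ => @fst_continuous p) (@open_gt R b)). Qed.

Lemma closed_fst_le (b : R) : closed [set p : T | p.1 <= b].
Proof. exact: (preimage_closed (fun p _ => @fst_continuous p) (@closed_le R b)). Qed.

Lemma closed_fst_ge (b : R) : closed [set p : T | b <= p.1].
Proof. exact: (preimage_closed (fun p _ => @fst_continuous p) (@closed_ge R b)). Qed.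

Lemma open_snd_norm2_lt x0 (r : R) : open [set p : T | norm2 (p.2 - x0) < r].
Proof. exact: (open_comp (fun p _ => @snd_norm2_continuous x0 p) (@open_lt R r)). Qed.

Lemma closed_snd_norm2_le x0 (r : R) : closed [set p : T | norm2 (p.2 - x0) <= r].
Proof.
exact: (preimage_closed (fun p _ => @snd_norm2_continuous x0 p) (@closed_le R r)).
Qed.

End GraphTopology.

Lemma connected_no_separation (T : topologicalType) (A C C' : set T) :
  connected A -> open C -> closed C' -> A `&` C = A `&` C' ->
  (exists p, A p /\ C p) -> (exists q, A q /\ ~ C q) -> False.
Proof.
move=> A_conn oC cC' AC [p [Ap Cp]] [q [Aq nCq]].
have := A_conn (A `&` C) (ex_intro _ p (conj Ap Cp)) (ex_intro2 _ _ C oC erefl)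
  (ex_intro2 _ _ C' cC' AC).
by move=> ACA; apply: nCq; have [] : (A `&` C) q by rewrite ACA.
Qed.

Section ConnectedGraph.
Variables (R : realType) (l : nat) (X : R -> 'cV[R]_l).
Local Notation graph := [set p : R * 'cV[R]_l | p.2 = X p.1].
Hypothesis X_conn : connected graph.
Variables (s0 d rho : R).
Hypothesis rho0 : 0 < rho.
Hypothesis no_sphere : forall t, `|t - s0| < d -> norm2 (X t - X s0) != rho.

Let x0 := X s0.

Let inside t : `|t - s0| < d -> norm2 (X t - x0) <= rho -> norm2 (X t - x0) < rho.
Proof. by move=> /no_sphere tr; rewrite le_eqVlt (negPf tr). Qed.

Lemma graph_escape_both_sides a b : a < s0 < b -> `|a - s0| < d -> `|b - s0| < d ->
  rho < norm2 (X a - x0) -> rho < norm2 (X b - x0) -> False.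
Proof.
move=> /andP[as0 s0b]; rewrite !ltr_distl => /andP[ad _] /andP[_ bd] Xa Xb.
apply: (@connected_no_separation _ graph
  ([set p | a < p.1] `&` [set p | p.1 < b] `&` [set p | norm2 (p.2 - x0) < rho])
  ([set p | a <= p.1] `&` [set p | p.1 <= b] `&` [set p | norm2 (p.2 - x0) <= rho])) => //.
- by apply: openI; [apply: openI|]; [exact: open_fst_gt|exact: open_fst_lt|
    exact: open_snd_norm2_lt].
- by apply: closedI; [apply: closedI|]; [exact: closed_fst_ge|exact: closed_fst_le|
    exact: closed_snd_norm2_le].
- apply/seteqP; split=> -[t y] /= [yX C]; split=> //; rewrite yX in C *.
    by case: C => -[/ltW ? /ltW ?] /ltW.
  case: C => -[a_t t_b] tr.
  have ta : a < t.
    by rewrite lt_neqAle a_t andbT; apply: contraTneq tr => <-; rewrite -ltNge.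
  have bt : t < b.
    by rewrite lt_neqAle t_b andbT; apply: contraTneq tr => ->; rewrite -ltNge.
  by split; [split|apply: inside => //; rewrite ltr_distl; apply/andP; split; lra].
- by exists (s0, x0); rewrite /= subrr norm2_0.
- by exists (b, X b); split=> // -[_ /=]; rewrite ltNge (ltW Xb).
Qed.

Lemma graph_escape_right b : s0 < b -> `|b - s0| < d -> rho < norm2 (X b - x0) -> False.
Proof.
move=> s0b /[dup] bd; rewrite ltr_distl => /andP[_ bd'] Xb.
have d0 : 0 < d by apply: le_lt_trans bd.
(* A point c left of s0 either escapes the ball too, or bounds the graph on the left. *)
set c := s0 - d / 2.
have cd : `|c - s0| < d by rewrite ltr_distl; apply/andP; split; rewrite /c; lra.
have [Xc|Xc] := leP (norm2 (X c - x0)) rho; last first.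
  by apply: (@graph_escape_both_sides c b) => //; apply/andP; split; rewrite /c; lra.
apply: (@connected_no_separation _ graph
  ([set p | p.1 < b] `&` ([set p | p.1 < c] `|` [set p | norm2 (p.2 - x0) < rho]))
  ([set p | p.1 <= b] `&` ([set p | p.1 <= c] `|` [set p | norm2 (p.2 - x0) <= rho])))
  => //.
- by apply: openI; [|apply: openU]; [exact: open_fst_lt|exact: open_fst_lt|
    exact: open_snd_norm2_lt].
- by apply: closedI; [|apply: closedU]; [exact: closed_fst_le|exact: closed_fst_le|
    exact: closed_snd_norm2_le].
- apply/seteqP; split=> -[t y] /= [yX C]; split=> //; rewrite yX in C *.
    by case: C => /ltW tb [/ltW tc|/ltW tr]; split=> //; [left|right].
  case: C => t_b C; have [tc|ct] := ltP t c; first by split; [rewrite /c in tc; lra|left].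
  have tr : norm2 (X t - x0) <= rho.
    by case: C => // tc; have -> : t = c by apply/eqP; rewrite eq_le tc ct.
  have tb : t < b.
    by rewrite lt_neqAle t_b andbT; apply: contraTneq tr => ->; rewrite -ltNge.
  split=> //; right; apply: inside => //.
  by rewrite ltr_distl; apply/andP; split; rewrite /c in ct; lra.
- by exists (s0, x0); split=> //; split=> //; right; rewrite /= subrr norm2_0.
- by exists (b, X b); split=> // -[/=]; rewrite ltxx.
Qed.

End ConnectedGraph.

Lemma connected_graph_opp (R : realType) (l : nat) (X : R -> 'cV[R]_l) :
  connected [set p : R * 'cV[R]_l | p.2 = X p.1] ->
  connected [set p : R * 'cV[R]_l | p.2 = X (- p.1)].
Proof.
move=> X_conn.
have -> : [set p : R * 'cV[R]_l | p.2 = X (- p.1)] =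
    (fun p => (- p.1, p.2)) @` [set p : R * 'cV[R]_l | p.2 = X p.1].
  apply/seteqP; split=> [[t y] /= yX|p [[t y] /= yX <-] /=]; last by rewrite opprK.
  by exists (- t, y); rewrite /= ?opprK.
apply: connected_continuous_connected X_conn (continuous_subspaceT _) => p.
apply: (@cvg_pair _ _ _ _ (nbhs (- p.1)) (nbhs p.2) _ _ _ (fun q => - q.1) snd).
  by apply: cvgN; exact: cvg_fst.
exact: cvg_snd.
Qed.

Lemma connected_graph_trapped (R : realType) (l : nat) (X : R -> 'cV[R]_l) (s0 d rho : R) :
  connected [set p : R * 'cV[R]_l | p.2 = X p.1] -> 0 < rho ->
  (forall t, `|t - s0| < d -> norm2 (X t - X s0) != rho) ->
  forall t, `|t - s0| < d -> norm2 (X t - X s0) < rho.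
Proof.
move=> X_conn rho0 no_sphere t td.
rewrite lt_neqAle no_sphere //= leNgt; apply/negP => Xt.
have [ts0|s0t|ts0] := ltgtP t s0; last by move: Xt; rewrite ts0 subrr norm2_0 ltNge ltW.
- apply: (@graph_escape_right _ _ (fun u => X (- u)) (connected_graph_opp X_conn)
    (- s0) d rho rho0 _ (- t)).
  + by move=> u; rewrite opprK => us; apply: no_sphere; rewrite -opprD normrN.
  + by rewrite ltrN2.
  + by rewrite opprK addrC distrC.
  + by rewrite !opprK.
- exact: (@graph_escape_right _ _ X X_conn s0 d rho rho0 no_sphere t s0t td Xt).
Qed.

Lemma norm2_le_of_mxnorm (R : realType) k (u : 'cV[R]_k) e :
  `|u| < e / (k%:R + 1) -> norm2 u <= e.
Proof.
have k1 : 0 < k%:R + 1 :> R by rewrite ltr_wpDl.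
rewrite ltr_pdivlMr // => ue; apply: le_trans (ler_norm2_mxnorm _) _.
by have := normr_ge0 u; have := ler0n R k; nra.
Qed.

Lemma cvg_norm2_near (R : realType) (T : Type) (F : set_system T) {FF : Filter F} k
    (g : T -> 'cV[R]_k) (y : 'cV[R]_k) :
  g @ F --> y -> forall e : R, 0 < e -> \forall t \near F, norm2 (g t - y) <= e.
Proof.
move=> /cvgr_dist_lt gy e e0.
have k1 : 0 < k%:R + 1 :> R by rewrite ltr_wpDl.
apply: filterS (gy _ (divr_gt0 e0 k1)) => t yt.
by apply: norm2_le_of_mxnorm; rewrite -normrN opprB.
Qed.

Lemma segment_uniform_near0 (R : realType) (P : R -> R -> Prop) (a b : R) :
  (forall s0, a <= s0 <= b -> exists2 d, 0 < d & exists2 c, 0 < c &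
     forall s t, `|s0 - s| < d -> 0 < t -> t < c -> P t s) ->
  exists2 t0, 0 < t0 & forall s, a <= s <= b -> P t0 s.
Proof.
move=> P_loc.
have near0 : \forall t \near (0 : R)^'+, `[a, b] `<=` P t.
  apply: ((compact_near_coveringP `[a, b]).1 (@segment_compact R a b)).
  move=> s0; rewrite /= in_itv /= => /P_loc[d d0 [c c0 Pc]].
  exists ([set s | `|s0 - s| < d], [set t | 0 < t < c]).
    split; first by apply/nbhs_ballP; exists d.
    apply: filterS (filterI (nbhs_right_gt 0) (nbhs_right_lt c0)).
    by move=> t [t0 tc] /=; rewrite t0.
  by move=> [s t] [/= s0s /andP[t0 tc]]; exact: Pc.
have [t [t0 Pt]] := filter_ex (filterI (nbhs_right_gt 0) near0).
by exists t => // s sab; apply: Pt; rewrite /= in_itv.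
Qed.

Section StablePath.
Variables (R : realType) (l m : nat).
Variable f : 'cV[R]_l -> 'cV[R]_m -> 'cV[R]_l.
Variable D : 'cV[R]_(l + m) -> 'M[R]_(l, l + m).
Hypothesis fD : forall z, fderiv (fun z => f (usubmx z) (dsubmx z)) z (D z).
Hypothesis D_cont : continuous D.
Variable Dxf : 'cV[R]_l -> 'cV[R]_m -> 'M[R]_l.
Hypothesis fDxf : forall x a, fderiv (f^~ a) x (Dxf x a).
Variables (Lam : R -> 'cV[R]_m) (lamm lamp : 'cV[R]_m).
Hypothesis Lam_der : forall s, derivable Lam s 1.
Hypothesis Lam_m : Lam s @[s --> -oo] --> lamm.
Hypothesis Lam_p : Lam s @[s --> +oo] --> lamp.
Variables (X : R -> 'cV[R]_l) (Xm Xp : 'cV[R]_l).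
Hypothesis X_fix : forall s, f (X s) (Lam s) = X s.
Hypothesis X_conn : connected [set p : R * 'cV[R]_l | p.2 = X p.1].
Hypothesis X_m : X s @[s --> -oo] --> Xm.
Hypothesis X_p : X s @[s --> +oo] --> Xp.
Hypothesis fXm : f Xm lamm = Xm.
Hypothesis fXp : f Xp lamp = Xp.
Variable N : nat.
Hypothesis DxfX_pow : forall s n, (N <= n)%N -> opnorm (Dxf (X s) (Lam s) ^+ n) < 1 / 4.

Lemma Lam_near s0 e : 0 < e -> exists2 d, 0 < d &
  forall t, `|t - s0| < d -> norm2 (Lam t - Lam s0) <= e.
Proof.
move=> e0; have Lam_cont : {for s0, continuous Lam}.
  exact/differentiable_continuous/(derivable1_diffP Lam s0).1.
have m1 : 0 < m%:R + 1 :> R by rewrite ltr_wpDl.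
have [d d0 Ld] := continuous_at_dist_lt Lam_cont (divr_gt0 e0 m1).
by exists d => // t td; apply: norm2_le_of_mxnorm; rewrite -normrN opprB Ld // distrC.
Qed.

Lemma X_near s0 e : 0 < e -> exists2 d, 0 < d &
  forall t, `|t - s0| < d -> norm2 (X t - X s0) <= e.
Proof.
move=> e0.
have q1 : opnorm (Dxf (X s0) (Lam s0) ^+ N) < 1.
  by apply: lt_trans (DxfX_pow s0 (leqnn N)) _; lra.
have [rho rho0 [K K0 X_lip]] := fixed_point_lipschitz fD fDxf (X_fix s0) q1.
have K1 : 0 < K + 1 by rewrite ltr_wpDl.
have rhoK : 0 < Num.min rho (rho / (2 * (K + 1))).
  by rewrite lt_min rho0 divr_gt0 // mulr_gt0.
have [d0 d00 Lam_d0] := Lam_near s0 rhoK.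
(* On the sphere of radius rho the Lipschitz bound would give rho <= rho / 2. *)
have X_rho t : `|t - s0| < d0 -> norm2 (X t - X s0) < rho.
  apply: (connected_graph_trapped X_conn rho0) => {}t /Lam_d0.
  rewrite le_min => /andP[Lrho LK]; apply/eqP => Xt.
  have Xle : norm2 (X t - X s0) <= rho by rewrite Xt.
  have := X_lip _ _ Xle Lrho (X_fix t); rewrite Xt.
  have := ler_wpM2l K0 LK; have := ler_half_div rho0 K0.
  lra.
have [d1 d10 Lam_d1] := Lam_near s0 (divr_gt0 e0 K1).
exists (Num.min d0 d1) => [|t]; first by rewrite lt_min d00 d10.
rewrite lt_min => /andP[td0 td1].
have /X_rho/ltW Xt := td0; have := Lam_d0 _ td0; rewrite le_min => /andP[Lrho _].
apply: le_trans (X_lip _ _ Xt Lrho (X_fix t)) _.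
apply: le_trans (ler_wpM2l K0 (Lam_d1 _ td1)) _.
by rewrite mulrCA ler_piMr ?(ltW e0) // ler_pdivrMr // mul1r lerDl.
Qed.

Definition contracting_at (r0 e0 s : R) :=
  forall r e, 0 < r -> r < r0 -> 0 < e -> e < e0 ->
  forall n, (N <= n <= N * N.+1)%N -> forall x, norm2 (x - X s) <= e ->
    exists A : 'M[R]_l,
      fderiv (fun y => (iter n (Fr f Lam r) (s, y)).2) x A /\ opnorm A < 1 / 2.

Lemma contracting_at_le r0 e0 r1 e1 s : r1 <= r0 -> e1 <= e0 ->
  contracting_at r0 e0 s -> contracting_at r1 e1 s.
Proof.
move=> r10 e10 C r e r0' rr1 e0' ee1.
exact: C (lt_le_trans rr1 r10) e0' (lt_le_trans ee1 e10).
Qed.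

Let n0 := (N * N.+1)%N.

Lemma contracting_near_fixed_point x0 a0 : f x0 a0 = x0 -> exists2 eta, 0 < eta &
  forall s c, 0 < c -> norm2 (X s - x0) <= eta ->
    (forall u, 0 <= u <= c -> norm2 (Lam (s + u) - a0) <= eta) ->
    contracting_at (c / (n0%:R + 1)) eta s.
Proof.
move=> fx0.
have f_cont := f_continuous fD x0 a0.
have Dxf_cont := Dxf_continuous fD fDxf D_cont x0 a0.
have [eta eta0 C] := iter_Fr_contracting_near_fixed_point fx0 f_cont fDxf Dxf_cont DxfX_pow.
exists eta => // s c c0 Xs Lam_near r e r0 rc e0 ee n nN x xXs.
apply: C => // [|k kn0]; first by apply: le_trans xXs _; exact: ltW.
have n01 : 0 < n0%:R + 1 :> R by rewrite ltr_wpDl.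
apply: Lam_near; rewrite mulr_ge0 ?ler0n ?ltW //=.
have kr : k%:R * r <= n0%:R * r by rewrite ler_wpM2r ?(ltW r0) // ler_nat.
by rewrite ltr_pdivlMr // in rc; lra.
Qed.

Lemma contracting_near s0 : exists2 d, 0 < d & exists2 t, 0 < t &
  forall s, `|s0 - s| < d -> contracting_at t t s.
Proof.
have [eta eta0 C] := contracting_near_fixed_point (X_fix s0).
have [dX dX0 Xd] := X_near s0 eta0.
have [dL dL0 Ld] := Lam_near s0 eta0.
have n01 : 0 < n0%:R + 1 :> R by rewrite ltr_wpDl.
exists (Num.min dX (dL / 2)); first by rewrite lt_min dX0 divr_gt0.
exists (Num.min eta (dL / 2 / (n0%:R + 1))); first by rewrite lt_min eta0 !divr_gt0.
move=> s; rewrite lt_min distrC => /andP[sX sL].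
apply: contracting_at_le (C s (dL / 2) _ (Xd _ sX) _); rewrite ?ge_min ?lexx ?orbT //.
  by rewrite divr_gt0.
move=> u /andP[u0 uL]; apply: Ld; rewrite addrAC.
by apply: le_lt_trans (ler_normD _ _) _; rewrite [`|u|]ger0_norm //; lra.
Qed.

Lemma contracting_near_pinfty : exists M, exists2 t, 0 < t &
  forall s, M < s -> contracting_at t t s.
Proof.
have [eta eta0 C] := contracting_near_fixed_point fXp.
have [M1 [_ XM1]] := cvg_norm2_near X_p eta0.
have [M2 [_ LM2]] := cvg_norm2_near Lam_p eta0.
have n01 : 0 < n0%:R + 1 :> R by rewrite ltr_wpDl.
exists (Num.max M1 M2), (Num.min eta (1 / (n0%:R + 1))).
  by rewrite lt_min eta0 divr_gt0.
move=> s; rewrite gt_max => /andP[sM1 sM2].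
apply: contracting_at_le (C s 1 ltr01 (XM1 _ sM1) _); rewrite ?ge_min ?lexx ?orbT //.
by move=> u /andP[u0 _]; apply: LM2; lra.
Qed.

Lemma contracting_near_ninfty : exists M, exists2 t, 0 < t &
  forall s, s < M -> contracting_at t t s.
Proof.
have [eta eta0 C] := contracting_near_fixed_point fXm.
have [M1 [_ XM1]] := cvg_norm2_near X_m eta0.
have [M2 [_ LM2]] := cvg_norm2_near Lam_m eta0.
have n01 : 0 < n0%:R + 1 :> R by rewrite ltr_wpDl.
exists (Num.min M1 M2 - 1), (Num.min eta (1 / (n0%:R + 1))).
  by rewrite lt_min eta0 divr_gt0.
move=> s; rewrite ltrBrDr lt_min => /andP[sM1 sM2].
apply: contracting_at_le (C s 1 ltr01 (XM1 _ _) _); rewrite ?ge_min ?lexx ?orbT //.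
  by lra.
by move=> u /andP[_ u1]; apply: LM2; lra.
Qed.

Lemma contracting_everywhere : exists r0 e0, 0 < r0 /\ 0 < e0 /\
  forall s, contracting_at r0 e0 s.
Proof.
have [Mp [tp tp0 Cp]] := contracting_near_pinfty.
have [Mm [tm tm0 Cm]] := contracting_near_ninfty.
have C_loc s0 : Mm <= s0 <= Mp -> exists2 d, 0 < d & exists2 c, 0 < c &
    forall s t, `|s0 - s| < d -> 0 < t -> t < c -> contracting_at t t s.
  move=> _; have [d d0 [t t0 C]] := contracting_near s0.
  exists d => //; exists t => // s t' s0s _ t't.
  by apply: contracting_at_le (C s s0s); exact: ltW.
have [t0 t00 C0] := segment_uniform_near0 C_loc.
set r0 := Num.min t0 (Num.min tp tm).
have r00 : 0 < r0 by rewrite !lt_min t00 tp0 tm0.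
exists r0, r0; do 2!split=> //; move=> s.
have [sMm|Mms] := ltP s Mm.
  by apply: contracting_at_le (Cm s sMm); rewrite !ge_min lexx !orbT.
have [Mps|sMp] := ltP Mp s.
  by apply: contracting_at_le (Cp s Mps); rewrite !ge_min lexx !orbT.
by apply: contracting_at_le (C0 s _); rewrite ?ge_min ?lexx ?Mms.
Qed.

End StablePath.

Theorem mainTheorem14 (R : realType) (l m : nat)
  (f : 'cV[R]_l -> 'cV[R]_m -> 'cV[R]_l)
  (Dxf : 'cV[R]_l -> 'cV[R]_m -> 'M[R]_l)
  (Lam : R -> 'cV[R]_m) (lamm lamp : 'cV[R]_m) (X : R -> 'cV[R]_l) (N : nat) :
  C1_2 f ->
  (forall (x : 'cV[R]_l) (lam : 'cV[R]_m), fderiv (fun y => f y lam) x (Dxf x lam)) ->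
  parameter_shift Lam lamm lamp ->
  stable_path f Dxf Lam lamm lamp X ->
  (forall (s : R) (n : nat), (N <= n)%N ->
     opnorm ((Dxf (X s) (Lam s)) ^+ n) < 1 / 4) ->
  exists r0 e0 : R, 0 < r0 /\ 0 < e0 /\
    forall r e : R, 0 < r -> r < r0 -> 0 < e -> e < e0 ->
    forall n : nat, (N <= n <= N * N.+1)%N ->
    forall (s : R) (x : 'cV[R]_l), norm2 (x - X s) <= e ->
      exists A : 'M[R]_l,
        fderiv (fun y : 'cV[R]_l => (iter n (Fr f Lam r) (s, y)).2) x A /\
        opnorm A < 1 / 2.
Proof.
move=> [D [fD D_cont]] fDxf [Lam_der [_ [Lam_m [Lam_p _]]]].
move=> [X_fix [X_conn [Xm [Xp [X_m [X_p [fXm [fXp _]]]]]]]] DxfX_pow.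
have [r0 [e0 [r00 [e00 C]]]] := contracting_everywhere fD D_cont fDxf Lam_der Lam_m Lam_p
  X_fix X_conn X_m X_p fXm fXp DxfX_pow.
by exists r0, e0; do 2!split=> //; move=> r e r0' rr0 e0' ee0 n nN s; exact: C.
Qed.
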